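(* Let $\beta=(\pi_1,\pi_2)$ be a chainable pair of patterns which is redundant, and let $\beta'=(\pi_1*\pi_2)$ be the single-pattern architecture. Then (1) $\mathcal{B}^\beta=\Sigma^{\pi_1*\pi_2}=\mathcal{B}^{\beta'}$; (2) $\|\beta'\|_0=\|\pi_1*\pi_2\|_0<\|\pi_1\|_0+\|\pi_2\|_0=\|\beta\|_0$.
   Context: A pattern is a tuple $\pi=(a,b,c,d)$ of positive integers; $\mathbf{S}_\pi:=\mathbf{I}_a\otimes\mathbf{1}_{b\times c}\otimes\mathbf{I}_d\in\{0,1\}^{abd\times acd}$; $\|\pi\|_0:=abcd$. A $\pi$-factor is a complex $abd\times acd$ matrix with support in that of $\mathbf{S}_\pi$; $\Sigma^\pi$ is the set of $\pi$-factors. Patterns $\pi_1=(a_1,b_1,c_1,d_1),\pi_2=(a_2,b_2,c_2,d_2)$ are chainable if $a_1c_1/a_2=b_2d_2/d_1=:r(\pi_1,\pi_2)$ is an integer, $a_1\mid a_2$, $d_2\mid d_1$; then $\pi_1*\pi_2:=(a_1,b_1d_1/d_2,a_2c_2/a_1,d_2)$. The chainable pair is redundant if $r(\pi_1,\pi_2)\ge\min(b_1,c_2)$. For an architecture $\alpha=(\pi_\ell)_{\ell=1}^L$, $\mathcal{B}^\alpha:=\{\mathbf{X}_1\cdots\mathbf{X}_L:\mathbf{X}_\ell\in\Sigma^{\pi_\ell}\}$ and $\|\alpha\|_0:=\sum_\ell\|\pi_\ell\|_0$. *)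

From HB Require Import structures.
From mathcomp Require Import all_boot all_algebra.
From mathcomp Require Import complex reals.
Set Implicit Arguments. Unset Strict Implicit. Unset Printing Implicit Defensive.
Import GRing.Theory Num.Theory.
Local Open Scope ring_scope.

Record pattern := Pattern { pa : nat; pb : nat; pc : nat; pd : nat }.

Definition valid_pattern (p : pattern) : Prop :=
  (0 < pa p)%N /\ (0 < pb p)%N /\ (0 < pc p)%N /\ (0 < pd p)%N.

Definition pnorm0 (p : pattern) : nat := (pa p * pb p * pc p * pd p)%N.

(* Support of S_pi = I_a (x) 1_{b x c} (x) I_d  (abd x acd, Kronecker row-major
   indexing): entry (i,j) is 1 iff i %/ (b d) = j %/ (c d) and i %% d = j %% d. *)
Definition S_supp (p : pattern) (i j : nat) : bool :=
  (i %/ (pb p * pd p) == j %/ (pc p * pd p))%N && (i %% pd p == j %% pd p)%N.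

Definition is_factor (R : realType) (p : pattern) (m n : nat) (X : 'M[R[i]]_(m, n)) : Prop :=
  m = (pa p * pb p * pd p)%N /\ n = (pa p * pc p * pd p)%N /\
  forall (i : 'I_m) (j : 'I_n), ~~ S_supp p i j -> X i j = 0.

Definition chainable (p1 p2 : pattern) : Prop :=
  (pa p2 %| pa p1 * pc p1)%N /\ (pd p1 %| pb p2 * pd p2)%N /\
  ((pa p1 * pc p1) %/ pa p2 = (pb p2 * pd p2) %/ pd p1)%N /\
  (pa p1 %| pa p2)%N /\ (pd p2 %| pd p1)%N.

Definition rchain (p1 p2 : pattern) : nat := ((pa p1 * pc p1) %/ pa p2)%N.

Definition pstar (p1 p2 : pattern) : pattern :=
  Pattern (pa p1) ((pb p1 * pd p1) %/ pd p2)%N ((pa p2 * pc p2) %/ pa p1)%N (pd p2).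

Definition redundant (p1 p2 : pattern) : Prop :=
  (minn (pb p1) (pc p2) <= rchain p1 p2)%N.

Fixpoint inB (R : realType) (al : seq pattern) (m n : nat) (X : 'M[R[i]]_(m, n)) : Prop :=
  match al with
  | [::] => False
  | [:: p] => is_factor p X
  | p :: al' => exists (k : nat) (X1 : 'M[R[i]]_(m, k)) (Y : 'M[R[i]]_(k, n)),
                  is_factor p X1 /\ inB al' Y /\ X = X1 *m Y
  end.

Definition anorm0 (al : seq pattern) : nat := (\sum_(p <- al) pnorm0 p)%N.

From mathcomp Require Import all_boot all_algebra complex reals.
From mathcomp Require Import zify ring.

(* Chainability lets us write p1 = (a, b, s r, t d) and p2 = (a s, r t, c, d), where
   r = r(p1, p2), so that p1 * p2 = (a, b t, s c, d).  Read row indices of p1 * p2 in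
   mixed radix as (alpha, beta; u) with u < t d, column indices as (J, gamma; v) with
   J < a s, v < d, and inner indices as (J, rho; u) with rho < r, u < t d.  In these
   digits the supports of p1 and p2 compose to exactly the support of p1 * p2, so
   products of factors are (p1 * p2)-factors.  Conversely, if b <= r the inner digit
   rho can store the row digit beta: a 0/1 p1-factor routes row i to the unique inner
   index (J, beta; u) compatible with column j, and a p2-factor carries the entries of
   X.  If c <= r, rho stores gamma instead and the construction is transposed.  The
   sparsity gain is a s t d (b c) < a s t d (b r + r c). *)

Set Implicit Arguments.
Unset Strict Implicit.
Unset Printing Implicit Defensive.

Import GRing.Theory.

Lemma ltn_mixed q x y X : (x < X -> y < q -> x * q + y < X * q)%N.
Proof. by move=> *; nia. Qed.

Lemma divn_mixed q x y : (y < q -> (x * q + y) %/ q = x)%N.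
Proof. by move=> lt_yq; rewrite divnMDl ?divn_small ?addn0 //; lia. Qed.

Lemma modn_mixed q x y : (y < q -> (x * q + y) %% q = y)%N.
Proof. by move=> lt_yq; rewrite modnMDl modn_small. Qed.

Lemma divn_eq2 m p q : (m = (m %/ q %/ p * p + m %/ q %% p) * q + m %% q)%N.
Proof. by rewrite -!divn_eq. Qed.

Lemma digits2_inj p q m m' :
  (m %/ q %/ p = m' %/ q %/ p -> m %/ q %% p = m' %/ q %% p -> m %% q = m' %% q ->
   m = m')%N.
Proof. by move=> eq_hi eq_mid eq_lo; rewrite (divn_eq2 m p q) (divn_eq2 m' p q) eq_hi eq_mid eq_lo. Qed.

Lemma digits2_mixed p q x y z : (y < p -> z < q ->
  [/\ ((x * p + y) * q + z) %/ q %/ p = x, ((x * p + y) * q + z) %/ q %% p = y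
     & ((x * p + y) * q + z) %% q = z])%N.
Proof. by move=> lt_yp lt_zq; rewrite divn_mixed // divn_mixed // modn_mixed // modn_mixed. Qed.

Lemma ltn_divn2 m x p q : (0 < p -> 0 < q -> m < x * p * q -> m %/ q %/ p < x)%N.
Proof. by move=> p_gt0 q_gt0 lt_m; rewrite !ltn_divLR. Qed.

Section MatrixSupport.
Variable R : pzSemiRingType.
Local Open Scope ring_scope.

Lemma mulmx_supp m K n (A : 'M[R]_(m, K)) (B : 'M[R]_(K, n)) (S1 S2 S : rel nat) :
  (forall (i : 'I_m) (k : 'I_K), ~~ S1 i k -> A i k = 0) ->
  (forall (k : 'I_K) (j : 'I_n), ~~ S2 k j -> B k j = 0) ->
  (forall i k j, S1 i k -> S2 k j -> S i j) ->
  forall (i : 'I_m) (j : 'I_n), ~~ S i j -> (A *m B) i j = 0.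
Proof.
move=> suppA suppB chain i j notS; rewrite mxE big1 // => k _.
have [S1ik|/suppA->] := boolP (S1 i k); last by rewrite mul0r.
have [S2kj|/suppB->] := boolP (S2 k j); last by rewrite mulr0.
by rewrite (chain _ _ _ S1ik S2kj) in notS.
Qed.

(* The graph S of a partial map from inner to row indices gives a 0/1 left factor;
   the right factor gathers the row of X that each inner index is routed to. *)
Lemma mulmx_graph_factor m K n (X : 'M[R]_(m, n))
    (S : 'I_m -> 'I_K -> bool) (P : 'I_K -> 'I_n -> bool) :
  (forall i i' k, S i k -> S i' k -> i = i') ->
  (forall i j, X i j != 0 -> exists k0, forall k, S i k && P k j = (k == k0)) ->
  exists (A : 'M[R]_(m, K)) (B : 'M[R]_(K, n)),
    [/\ X = A *m B, forall i k, ~~ S i k -> A i k = 0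
      & forall k j, ~~ P k j -> B k j = 0].
Proof.
move=> S_fun S_uniq.
exists (\matrix_(i, k) if S i k then 1 else 0).
exists (\matrix_(k, j) if P k j then \sum_i (if S i k then 1 else 0) * X i j else 0).
split; last 2 first.
- by move=> i k /negbTE Sik; rewrite mxE Sik.
- by move=> k j /negbTE Pkj; rewrite mxE Pkj.
apply/matrixP => i j; rewrite !mxE.
have gather k : S i k -> \sum_i' (if S i' k then 1 else 0) * X i' j = X i j.
  move=> Sik; rewrite (bigD1 i) //= Sik mul1r big1 ?addr0 // => i' ne_i'i.
  have [Si'k|_] := boolP (S i' k); last by rewrite mul0r.
  by rewrite (S_fun _ _ _ Si'k Sik) eqxx in ne_i'i.
rewrite (eq_bigr (fun k => if S i k && P k j then X i j else 0)) => [|k _]; last first.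
  rewrite !mxE; have [Sik|_] := boolP (S i k); last by rewrite mul0r.
  by case: (P k j); rewrite mul1r ?gather.
have [->|/S_uniq[k0 k0P]] := eqVneq (X i j) 0; first by rewrite big1 // => k _; case: ifP.
rewrite (bigD1 k0) //= k0P eqxx big1 ?addr0 // => k /negbTE ne_kk0.
by rewrite k0P ne_kk0.
Qed.

End MatrixSupport.

Section RedundantPair.
Variables (a b s r t d c : nat).

Let p1 := Pattern a b (s * r) (t * d).
Let p2 := Pattern (a * s) (r * t) c d.
Let p12 := Pattern a (b * t) (s * c) d.

Lemma S_supp1 i k : S_supp p1 i k =
  (i %/ (t * d) %/ b == k %/ (t * d) %/ r %/ s) && (i %% (t * d) == k %% (t * d)).
Proof.
by rewrite /S_supp /= -!divnMA (mulnC b) (mulnC (s * r)) (mulnC r s).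
Qed.

Lemma S_supp2 k j : S_supp p2 k j =
  (k %/ (t * d) %/ r == j %/ d %/ c) && (k %% (t * d) %% d == j %% d).
Proof.
by rewrite /S_supp /= -!divnMA modn_dvdm ?dvdn_mull // (mulnC c) -mulnA mulnC.
Qed.

Lemma S_supp12 i j : S_supp p12 i j =
  (i %/ (t * d) %/ b == j %/ d %/ c %/ s) && (i %% (t * d) %% d == j %% d).
Proof.
by rewrite /S_supp /= -!divnMA modn_dvdm ?dvdn_mull // -(mulnA b) (mulnC b) (mulnC (s * c)) (mulnC s c) mulnA.
Qed.

Lemma S_supp_chain i k j : S_supp p1 i k -> S_supp p2 k j -> S_supp p12 i j.
Proof.
rewrite S_supp1 S_supp2 S_supp12 => /andP[/eqP-> /eqP->] /andP[/eqP-> /eqP->].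
by rewrite !eqxx.
Qed.

Variable R : realType.
Hypotheses (b_gt0 : (0 < b)%N) (c_gt0 : (0 < c)%N) (t_gt0 : (0 < t)%N) (d_gt0 : (0 < d)%N).

Lemma is_factor_mulmx m K n (A : 'M[R[i]]_(m, K)) (B : 'M[R[i]]_(K, n)) :
  is_factor p1 A -> is_factor p2 B -> is_factor p12 (A *m B)%R.
Proof.
move=> [em [_ suppA]] [_ [en suppB]]; split; first by rewrite em /=; ring.
split; first by rewrite en /=; ring.
exact: mulmx_supp suppA suppB S_supp_chain.
Qed.

Lemma inner_index_lt j x u : (j < a * (s * c) * d -> x < r -> u < t * d ->
  (j %/ d %/ c * r + x) * (t * d) + u < a * (s * r) * (t * d))%N.
Proof.
move=> lt_j lt_x lt_u; rewrite (mulnA a s r); apply: ltn_mixed => //.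
by apply: ltn_mixed => //; apply: ltn_divn2 => //; rewrite -(mulnA a).
Qed.

Lemma factor_split_rows m n (X : 'M[R[i]]_(m, n)) :
  (b <= r)%N -> is_factor p12 X -> inB [:: p1; p2] X.
Proof.
move=> le_br [em [en suppX]].
pose route (i : 'I_m) (k : 'I_(a * (s * r) * (t * d))) :=
  S_supp p1 i k && (k %/ (t * d) %% r == i %/ (t * d) %% b)%N.
have route_fun i i' k : route i k -> route i' k -> i = i'.
  rewrite /route !S_supp1 => /andP[/andP[/eqP ? /eqP ?] /eqP ?].
  move=> /andP[/andP[/eqP ? /eqP ?] /eqP ?].
  by apply: ord_inj; apply: (digits2_inj (p := b) (q := t * d)); congruence.
have route_uniq i j : (X i j != 0)%R ->
    exists k0, forall k, route i k && S_supp p2 k j = (k == k0).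
  move=> nzX; have : S_supp p12 i j by apply: contraNT nzX => /suppX/eqP.
  rewrite S_supp12 => /andP[/eqP hi /eqP lo].
  have lt_beta : (i %/ (t * d) %% b < r)%N by apply: leq_trans le_br; exact: ltn_pmod.
  have lt_u : (i %% (t * d) < t * d)%N by rewrite ltn_pmod // muln_gt0 t_gt0.
  have [hi0 mid0 lo0] := digits2_mixed (j %/ d %/ c) lt_beta lt_u.
  have lt_j : (j < a * (s * c) * d)%N by rewrite -en.
  exists (Ordinal (inner_index_lt lt_j lt_beta lt_u)) => k.
  rewrite /route S_supp1 S_supp2; apply/idP/eqP => [|-> /=].
    move=> /andP[/andP[/andP[_ /eqP ?] /eqP ?] /andP[/eqP ? _]].
    by apply: ord_inj => /=; apply: (digits2_inj (p := r) (q := t * d)); congruence.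
  by rewrite hi0 mid0 lo0 hi lo !eqxx.
have [A [B [-> suppA suppB]]] := mulmx_graph_factor route_fun route_uniq.
exists (a * (s * r) * (t * d))%N, A, B; split; [|split=> //].
  split; first by rewrite em /=; ring.
  by split=> // i k notS; apply: suppA; rewrite /route (negbTE notS).
by split; [rewrite /=; ring | split; [rewrite en /=; ring | exact: suppB]].
Qed.

Lemma factor_split_cols m n (X : 'M[R[i]]_(m, n)) :
  (c <= r)%N -> is_factor p12 X -> inB [:: p1; p2] X.
Proof.
move=> le_cr [em [en suppX]].
pose route (j : 'I_n) (k : 'I_(a * (s * r) * (t * d))) :=
  S_supp p2 k j && (k %/ (t * d) %% r == j %/ d %% c)%N.
have route_fun j j' k : route j k -> route j' k -> j = j'.
  rewrite /route !S_supp2 => /andP[/andP[/eqP ? /eqP ?] /eqP ?].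
  move=> /andP[/andP[/eqP ? /eqP ?] /eqP ?].
  by apply: ord_inj; apply: (digits2_inj (p := c) (q := d)); congruence.
have route_uniq j i : (X^T j i != 0)%R ->
    exists k0, forall k, route j k && S_supp p1 i k = (k == k0).
  rewrite mxE => nzX; have : S_supp p12 i j by apply: contraNT nzX => /suppX/eqP.
  rewrite S_supp12 => /andP[/eqP hi /eqP lo].
  have lt_gamma : (j %/ d %% c < r)%N by apply: leq_trans le_cr; exact: ltn_pmod.
  have lt_u : (i %% (t * d) < t * d)%N by rewrite ltn_pmod // muln_gt0 t_gt0.
  have [hi0 mid0 lo0] := digits2_mixed (j %/ d %/ c) lt_gamma lt_u.
  have lt_j : (j < a * (s * c) * d)%N by rewrite -en.
  exists (Ordinal (inner_index_lt lt_j lt_gamma lt_u)) => k.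
  rewrite /route S_supp1 S_supp2; apply/idP/eqP => [|-> /=].
    move=> /andP[/andP[/andP[/eqP ? _] /eqP ?] /andP[_ /eqP ?]].
    by apply: ord_inj => /=; apply: (digits2_inj (p := r) (q := t * d)); congruence.
  by rewrite hi0 mid0 lo0 hi lo !eqxx.
have [A [B [eXT suppA suppB]]] := mulmx_graph_factor route_fun route_uniq.
exists (a * (s * r) * (t * d))%N, B^T%R, A^T%R; split; [|split].
- split; first by rewrite em /=; ring.
  by split=> // i k notS; rewrite mxE; apply: suppB.
- split; first by rewrite /=; ring.
  split; first by rewrite en /=; ring.
  by move=> k j notS; rewrite mxE; apply: suppA; rewrite /route (negbTE notS).
- by rewrite -trmx_mul -eXT trmxK.
Qed.

Lemma inB_redundant_pair m n (X : 'M[R[i]]_(m, n)) :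
  (minn b c <= r)%N -> inB [:: p1; p2] X <-> is_factor p12 X.
Proof.
move=> red; split=> [[K [A [B [fA [fB ->]]]]]|fX]; first exact: is_factor_mulmx.
move: red; rewrite geq_min => /orP[le_br|le_cr].
  exact: factor_split_rows.
exact: factor_split_cols.
Qed.

Lemma pnorm0_redundant_pair :
  (0 < a)%N -> (0 < s)%N -> (minn b c <= r)%N -> (pnorm0 p12 < pnorm0 p1 + pnorm0 p2)%N.
Proof.
move=> a_gt0 s_gt0 red; rewrite /pnorm0 /=.
have -> : (a * (b * t) * (s * c) * d = (a * s * t * d) * (b * c))%N by ring.
have -> : (a * b * (s * r) * (t * d) + a * s * (r * t) * c * d
           = (a * s * t * d) * (b * r + r * c))%N by ring.
rewrite ltn_pmul2l ?muln_gt0 ?a_gt0 ?s_gt0 ?t_gt0 ?d_gt0 //.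
by move: red; rewrite geq_min => /orP[] le_r; nia.
Qed.

End RedundantPair.

Lemma chainable_shape a b c1 d1 a2 b2 c d :
  valid_pattern (Pattern a b c1 d1) -> valid_pattern (Pattern a2 b2 c d) ->
  chainable (Pattern a b c1 d1) (Pattern a2 b2 c d) ->
  exists s r t, (0 < s)%N /\ (0 < t)%N /\
    [/\ c1 = (s * r)%N, d1 = (t * d)%N, a2 = (a * s)%N, b2 = (r * t)%N
      & rchain (Pattern a b c1 d1) (Pattern a2 b2 c d) = r].
Proof.
rewrite /valid_pattern /chainable /rchain /=.
move=> [a_gt0 [_ [c1_gt0 d1_gt0]]] [_ [_ [_ d_gt0]]].
move=> [dvd_a2 [dvd_d1 [er [/dvdnP[s ea2] /dvdnP[t ed1]]]]].
set r := (a * c1 %/ a2)%N.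
have ec1 : c1 = (s * r)%N.
  apply/eqP; rewrite -(eqn_pmul2l a_gt0) -{1}(divnK dvd_a2) -/r ea2; apply/eqP; ring.
have eb2 : b2 = (r * t)%N.
  apply/eqP; rewrite -(eqn_pmul2r d_gt0) -(divnK dvd_d1) -er -/r ed1; apply/eqP; ring.
exists s, r, t; split; first by move: c1_gt0; rewrite ec1 muln_gt0 => /andP[].
split; first by move: d1_gt0; rewrite ed1 muln_gt0 => /andP[].
by split=> //; rewrite ea2 mulnC.
Qed.

Lemma pstar_shape a b s r t d c : (0 < a)%N -> (0 < d)%N ->
  pstar (Pattern a b (s * r) (t * d)) (Pattern (a * s) (r * t) c d)
  = Pattern a (b * t) (s * c) d.
Proof. by move=> a_gt0 d_gt0; rewrite /pstar /= mulnA mulnK // -mulnA mulKn. Qed.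

Theorem lemma4p14 (R : realType) (p1 p2 : pattern) :
  valid_pattern p1 -> valid_pattern p2 ->
  chainable p1 p2 -> redundant p1 p2 ->
  ((forall (m n : nat) (X : 'M[R[i]]_(m, n)),
       (inB [:: p1; p2] X <-> is_factor (pstar p1 p2) X) /\
       (is_factor (pstar p1 p2) X <-> inB [:: pstar p1 p2] X)) /\
   (anorm0 [:: pstar p1 p2] = pnorm0 (pstar p1 p2) /\
    (pnorm0 (pstar p1 p2) < pnorm0 p1 + pnorm0 p2)%N /\
    (pnorm0 p1 + pnorm0 p2)%N = anorm0 [:: p1; p2])).
Proof.
case: p1 p2 => a b c1 d1 [a2 b2 c d] valid1 valid2 chain.
have [s [r [t [s_gt0 [t_gt0 [ec1 ed1 ea2 eb2 er]]]]]] := chainable_shape valid1 valid2 chain.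
move: valid1 valid2 => [a_gt0 [b_gt0 _]] [_ [_ [c_gt0 d_gt0]]].
rewrite /redundant er; subst c1 d1 a2 b2 => red.
rewrite pstar_shape //; split=> [m n X|].
  by split; [exact: inB_redundant_pair | split].
rewrite /anorm0 big_seq1 big_cons big_seq1; split=> //; split=> //.
exact: pnorm0_redundant_pair.
Qed.
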